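(* Let $f(r)$ denote the minimum number of edges of an $r$-partite intersecting hypergraph $\mathcal{H}$ with $\tau(\mathcal{H}) \ge r-1$. Then $f(4)=6$, $f(5)=9$, and $12 \le f(6) \le 15$.
   Context: A hypergraph is $r$-partite if its vertex set can be partitioned into $r$ parts such that every edge contains precisely one vertex from each part. A hypergraph is intersecting if every two edges have nonempty intersection. The cover number $\tau(\mathcal{H})$ is the minimum size of a vertex set meeting every edge. *)

From mathcomp Require Import all_boot.
Set Implicit Arguments. Unset Strict Implicit. Unset Printing Implicit Defensive.

(* It is r-partite w.r.t. the partition of the vertex set given by
   part : T -> 'I_r (parts = fibres of part) if every edge contains
   precisely one vertex from each part. *)
Definition rpartite (r : nat) (T : finType) (part : T -> 'I_r)
    (E : {set {set T}}) : Prop :=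
  forall e, e \in E -> forall i : 'I_r, #|[set v in e | part v == i]| = 1.

Definition intersecting (T : finType) (E : {set {set T}}) : Prop :=
  forall e1 e2, e1 \in E -> e2 \in E -> e1 :&: e2 != set0.

Definition is_cover (T : finType) (E : {set {set T}}) (C : {set T}) : Prop :=
  forall e, e \in E -> C :&: e != set0.

Definition tau_ge (T : finType) (E : {set {set T}}) (k : nat) : Prop :=
  forall C : {set T}, is_cover E C -> k <= #|C|.

Definition admissible (r : nat) (T : finType) (part : T -> 'I_r)
    (E : {set {set T}}) : Prop :=
  [/\ rpartite part E, intersecting E & tau_ge E (r - 1)].

Definition f_le (r m : nat) : Prop :=
  exists (T : finType) (part : T -> 'I_r) (E : {set {set T}}),
    admissible part E /\ #|E| <= m.

Definition f_ge (r m : nat) : Prop :=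
  forall (T : finType) (part : T -> 'I_r) (E : {set {set T}}),
    admissible part E -> m <= #|E|.

Definition f_eq (r m : nat) : Prop := f_le r m /\ f_ge r m.

From mathcomp Require Import all_boot zify.
Set Implicit Arguments. Unset Strict Implicit. Unset Printing Implicit Defensive.

(* Let N(k) be a lower bound on the number of edges of an
   r-partite intersecting hypergraph with tau >= k.  Deleting the edges through
   a set S of vertices lying in one part lowers tau by at most |S| and deletes
   exactly sum_{v in S} deg v edges, since every edge meets S at most once; so
   sum_{v in S} deg v + N(k - |S|) <= |E|.  For S a single vertex this bounds
   every degree by D = |E| - N(k-1); for S the vertices of degree >= 3 in one
   part it bounds their number.  On the other hand any two edges meet, so
   |E| (|E| - 1) <= sum_v deg v (deg v - 1), and the degree constraints bound
   the right-hand side part by part.  For every |E| below the claimed N(k) the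
   two estimates are checked to contradict each other, for k = 2, ..., r - 1.

   A word w over {0..q} of length r encodes the edge
   {(i, w_i)} of an r-partite hypergraph on [r] x [q+1].  For the explicit
   families below, intersection is a finite check, and tau >= r - 1 is checked
   by a branching search: a cover must contain one of the r vertices of the
   first remaining edge. *)

Definition edges_lb (r k N : nat) : Prop :=
  forall (T : finType) (part : T -> 'I_r) (E : {set {set T}}),
    rpartite part E -> intersecting E -> tau_ge E k -> N <= #|E|.

Lemma tau_ge_leq (T : finType) (E : {set {set T}}) k k' :
  k' <= k -> tau_ge E k -> tau_ge E k'.
Proof. by move=> le_k'k tauE C /tauE; exact: leq_trans. Qed.

Lemma edges_lb1 r : edges_lb r 1 1.
Proof.
move=> T part E _ _ tauE; rewrite card_gt0; apply/negP => /eqP E0.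
suff: 1 <= #|(set0 : {set T})| by rewrite cards0.
by apply: tauE => e; rewrite E0 inE.
Qed.

Lemma f_ge_of_edges_lb r m : edges_lb r (r - 1) m -> f_ge r m.
Proof. by move=> lb T part E [partE intE tauE]; exact: lb partE intE tauE. Qed.

Lemma sum_bool_card (T : finType) (P Q : pred T) :
  \sum_(v | P v) (Q v : nat) = #|[set v | P v && Q v]|.
Proof. by rewrite -sum1dep_card big_mkcondr; apply: eq_bigr => v _; case: (Q v). Qed.

Lemma pred_mul_double d : d * d.-1 = 2 * 'C(d, 2).
Proof. by rewrite -[d.-1]bin1 mul_bin_diag. Qed.

Lemma deg_pairs_le d D :
  d <= D -> D <= 3 -> d * d.-1 <= d * (minn D 2).-1 + 3 * (2 < d).
Proof. by case: d => [|[|[|[|d]]]]; case: D => [|[|[|[|D]]]]. Qed.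

Lemma leq_foldr_maxn s x : x \in s -> x <= foldr maxn 0 s.
Proof.
elim: s => //= y s IH; rewrite inE leq_max => /orP[/eqP-> | /IH ->];
  by rewrite ?leqnn ?orbT.
Qed.

Definition heavy_bound (Nf : nat -> nat) (k n : nat) : nat :=
  foldr maxn 0 [seq t <- iota 1 n | 3 * t + Nf (k - t) <= n].

Section Degrees.

Variables (r : nat) (T : finType) (part : T -> 'I_r) (E : {set {set T}}).

Definition deg (v : T) : nat := \sum_(e in E) (v \in e : nat).

Definition avoiding (S : {set T}) : {set {set T}} := [set e in E | [disjoint e & S]].

Definition heavy (i : 'I_r) : {set T} := [set v | part v == i & 2 < deg v].

Lemma avoiding_sub S : avoiding S \subset E.
Proof. by apply/subsetP => e; rewrite inE => /andP[]. Qed.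

Lemma tau_ge_avoiding S k : tau_ge E k -> tau_ge (avoiding S) (k - #|S|).
Proof.
move=> tauE C coverC.
suff: k <= #|C :|: S| by have [le_US _] := leq_card_setU C S; lia.
apply: tauE => e eE; case: (boolP (e :&: S == set0)) => [dis | /set0Pn[v]].
- have /set0Pn[v] : C :&: e != set0 by apply: coverC; rewrite inE eE -setI_eq0.
  by rewrite !inE => /andP[vC ve]; apply/set0Pn; exists v; rewrite !inE vC ve.
- by rewrite !inE => /andP[ve vS]; apply/set0Pn; exists v; rewrite !inE vS ve orbT.
Qed.

Hypothesis partE : rpartite part E.

Lemma sum_deg_part i : \sum_(v | part v == i) deg v = #|E|.
Proof.
rewrite /deg exchange_big /= -sum1_card; apply: eq_bigr => e eE.
by rewrite sum_bool_card -(partE eE i); apply: eq_card => v; rewrite !inE andbC.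
Qed.

Lemma deg0_edges0 : 0 < r -> (forall v, deg v = 0) -> #|E| = 0.
Proof. by move=> r_gt0 deg0; rewrite -(sum_deg_part (Ordinal r_gt0)) big1. Qed.

Lemma sum_deg_le_not_avoiding (S : {set T}) i :
  {subset S <= [pred v | part v == i]} -> \sum_(v in S) deg v <= #|E :\: avoiding S|.
Proof.
move=> SinI.
have -> : #|E :\: avoiding S| = \sum_(e in E) (e \notin avoiding S : nat).
  by rewrite sum_bool_card; apply: eq_card => e; rewrite !inE andbC.
rewrite /deg exchange_big /=; apply: leq_sum => e eE; rewrite sum_bool_card.
case: (boolP (e \in avoiding S)) => [| _].
- rewrite inE eE /= => dis; rewrite leqn0 cards_eq0; apply/eqP/setP => v.
  by rewrite !inE; apply/negP => /andP[vS ve]; rewrite (disjointFr dis ve) in vS.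
- rewrite /= -(partE eE i); apply: subset_leq_card; apply/subsetP => v.
  by rewrite !inE => /andP[/SinI vi ve]; rewrite ve.
Qed.

Lemma sum_deg_pairs_part i D :
  D <= 3 -> (forall v, deg v <= D) ->
  \sum_(v | part v == i) deg v * (deg v).-1
    <= (#|E| * (minn D 2).-1 + 3 * #|heavy i|) %/ 2 * 2.
Proof.
move=> D_le3 degD.
rewrite (eq_bigr _ (fun v _ => pred_mul_double (deg v))) -big_distrr /=.
suff: 2 * \sum_(v | part v == i) 'C(deg v, 2)
        <= #|E| * (minn D 2).-1 + 3 * #|heavy i|.
  by move: (\sum_(v | _) _) (_ + _) => q X; lia.
rewrite big_distrr /= -(sum_deg_part i) big_distrl /heavy -sum_bool_card.
rewrite big_distrr -big_split /=.
apply: leq_sum => v _; rewrite -pred_mul_double.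
exact: deg_pairs_le (degD v) D_le3.
Qed.

Hypothesis intE : intersecting E.

Lemma sum_deg_add_lb (S : {set T}) i k N :
  {subset S <= [pred v | part v == i]} -> tau_ge E k -> edges_lb r (k - #|S|) N ->
  \sum_(v in S) deg v + N <= #|E|.
Proof.
move=> SinI tauE lbN.
have subE := avoiding_sub S.
have lb_avoid : N <= #|avoiding S|.
  apply: lbN (tau_ge_avoiding tauE).
  - by move=> e /(subsetP subE); exact: partE.
  - by move=> e1 e2 /(subsetP subE) e1E /(subsetP subE); exact: intE.
rewrite -(cardsID (avoiding S) E) (setIidPr subE) addnC.
exact: leq_add lb_avoid (sum_deg_le_not_avoiding SinI).
Qed.

Lemma deg_add_lb v k N : tau_ge E k -> edges_lb r k.-1 N -> deg v + N <= #|E|.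
Proof.
move=> tauE lbN.
have vI : {subset [set v] <= [pred w | part w == part v]}.
  by move=> w; rewrite !inE => /eqP ->.
have := sum_deg_add_lb vI tauE (N := N); rewrite big_set1; apply.
by rewrite cards1 subn1.
Qed.

Lemma card_heavy_le (Nf : nat -> nat) k i :
  0 < k -> (forall j, j < k -> edges_lb r j (Nf j)) -> tau_ge E k ->
  #|heavy i| <= heavy_bound Nf k #|E|.
Proof.
move=> k_gt0 lbNf tauE; set t := #|heavy i|.
have [-> // | t_gt0] := posnP t.
have heavyI : {subset heavy i <= [pred v | part v == i]}.
  by move=> v; rewrite inE => /andP[].
have lb_t : edges_lb r (k - t) (Nf (k - t)) by apply: lbNf; lia.
have le_3t : 3 * t <= \sum_(v in heavy i) deg v.
  by rewrite mulnC -sum_nat_const leq_sum // => v; rewrite inE => /andP[_].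
have := sum_deg_add_lb heavyI tauE lb_t.
by move=> le_sum; apply: leq_foldr_maxn; rewrite mem_filter mem_iota; lia.
Qed.

Lemma intersecting_pairs : #|E| * #|E|.-1 <= \sum_v deg v * (deg v).-1.
Proof.
have -> : \sum_v deg v * (deg v).-1 = \sum_(e in E) \sum_v (v \in e) * (deg v).-1.
  by rewrite exchange_big; apply: eq_bigr => v _; rewrite /deg big_distrl.
rewrite -sum_nat_const; apply: leq_sum => e eE.
have degE v :
    (v \in e) * (deg v).-1 = \sum_(e' in E | e' != e) ((v \in e) && (v \in e') : nat).
  case: (boolP (v \in e)) => ve; last by rewrite mul0n big1.
  by rewrite mul1n /deg (bigD1 e eE) /= ve.
rewrite (eq_bigr _ (fun v _ => degE v)) exchange_big /=.
rewrite -[#|E|]sum1_card (bigD1 e eE) /=; apply: leq_sum => e' /andP[e'E _].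
have /set0Pn[x] := intE eE e'E; rewrite inE => /andP[xe xe'].
by rewrite (bigD1 x) //= xe xe'.
Qed.

Lemma intersecting_pairs_bound D h :
  D <= 3 -> (forall v, deg v <= D) -> (forall i, #|heavy i| <= h) ->
  #|E| * #|E|.-1 <= r * ((#|E| * (minn D 2).-1 + 3 * h) %/ 2 * 2).
Proof.
move=> D_le3 degD heavy_h; apply: leq_trans intersecting_pairs _.
set B := _ %/ 2 * 2.
rewrite (partition_big part xpredT) //= -[X in X * B]card_ord -sum_nat_const.
apply: leq_sum => i _; apply: leq_trans (sum_deg_pairs_part i D_le3 degD) _.
by rewrite leq_mul2r leq_div2r ?orbT // leq_add2l leq_mul2l heavy_h orbT.
Qed.

End Degrees.

(* [D] bounds every degree and [h] the number of vertices of degree at least 3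
   in each part; since every part contributes an even number, 2 C(deg v, 2), to
   the pair count, the per-part bound is rounded down to an even number.  The
   case [D = 0] is refuted separately, as it forces [E] to be empty. *)
Definition level_refuted (r k : nat) (Nf : nat -> nat) (n : nat) : bool :=
  let D := n - Nf k.-1 in
  let h := if 2 < D then heavy_bound Nf k n else 0 in
  (D <= 3) &&
  (if D == 0 then n != 0 else r * ((n * (minn D 2).-1 + 3 * h) %/ 2 * 2) < n * n.-1).

Lemma edges_lb_step r k Nk (Nf : nat -> nat) :
  0 < r -> 0 < k -> (forall j, j < k -> edges_lb r j (Nf j)) ->
  (forall n, Nf k.-1 <= n < Nk -> level_refuted r k Nf n) -> edges_lb r k Nk.
Proof.
move=> r_gt0 k_gt0 lbNf refuted T part E partE intE tauE.
rewrite leqNgt; apply/negP => ltENk.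
have lb_k1 : edges_lb r k.-1 (Nf k.-1) by apply: lbNf; rewrite ltn_predL.
have lb_prev := lb_k1 _ _ _ partE intE (tau_ge_leq (leq_pred k) tauE).
have := refuted #|E|; rewrite lb_prev ltENk => /(_ isT) /andP[D_le3].
set D := #|E| - Nf k.-1 => refuted_n.
have degD v : deg E v <= D.
  by have := deg_add_lb partE intE v tauE lb_k1; rewrite /D; lia.
have heavy_h i : #|heavy part E i| <= if 2 < D then heavy_bound Nf k #|E| else 0.
  case: ifP => [_ | D_le2]; first exact: card_heavy_le.
  rewrite leqn0 cards_eq0; apply/eqP/setP => v; rewrite !inE.
  by apply/negP => /andP[_]; have := degD v; lia.
move: refuted_n; have [D0 | _] := eqVneq D 0.
- rewrite (deg0_edges0 partE r_gt0) // => v.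
  by apply/eqP; rewrite -leqn0 -D0.
- by rewrite ltnNge (intersecting_pairs_bound partE intE D_le3 degD heavy_h).
Qed.

Definition lb_table_ok (r : nat) (s : seq nat) : bool :=
  let Nf := nth 0 s in
  [&& 0 < r, Nf 0 == 0, Nf 1 <= 1 &
      all (fun k => all (level_refuted r k Nf) (iota (Nf k.-1) (Nf k - Nf k.-1)))
          (iota 2 (size s - 2))].

Lemma edges_lb_table r s :
  lb_table_ok r s -> forall k, k < size s -> edges_lb r k (nth 0 s k).
Proof.
case/and4P => r_gt0 /eqP s0 s1 /allP levels.
elim/ltn_ind => -[|[|k]] IH lt_ks.
- by rewrite s0.
- by move=> T part E partE intE tauE; exact: leq_trans s1 (edges_lb1 partE intE tauE).
- apply: edges_lb_step => // [j lt_jk | n /andP[lo hi]].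
  + by apply: IH => //; exact: ltn_trans lt_ks.
  + have lvl : k.+2 \in iota 2 (size s - 2) by rewrite mem_iota; lia.
    by apply: (allP (levels _ lvl)); rewrite mem_iota; lia.
Qed.

Lemma f_ge_of_lb_table r s :
  lb_table_ok r s -> r - 1 < size s -> f_ge r (nth 0 s (r - 1)).
Proof. by move=> ok lt_rs; apply/f_ge_of_edges_lb/edges_lb_table. Qed.

Lemma f_ge_4_6 : f_ge 4 6.
Proof. exact: (@f_ge_of_lb_table 4 [:: 0; 1; 3; 6]). Qed.

Lemma f_ge_5_9 : f_ge 5 9.
Proof. exact: (@f_ge_of_lb_table 5 [:: 0; 1; 3; 5; 9]). Qed.

Lemma f_ge_6_12 : f_ge 6 12.
Proof. exact: (@f_ge_of_lb_table 6 [:: 0; 1; 3; 5; 8; 12]). Qed.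

Section WordHypergraph.

Variables r q : nat.

Definition word_edge (w : seq nat) : {set 'I_r * 'I_q.+1} :=
  [set p : 'I_r * 'I_q.+1 | val p.2 == nth 0 w p.1].

Definition word_hypergraph (W : seq (seq nat)) : {set {set 'I_r * 'I_q.+1}} :=
  [set e in map word_edge W].

Definition agree (w1 w2 : seq nat) : bool :=
  has (fun i => nth 0 w1 i == nth 0 w2 i) (iota 0 r).

Fixpoint coverable (k : nat) (ws : seq (seq nat)) {struct k} : bool :=
  if ws is w :: ws' then
    if k is k'.+1 then
      has (fun i => coverable k' [seq w' <- ws' | nth 0 w' i != nth 0 w i]) (iota 0 r)
    else false
  else true.

Lemma coverable_of_cover k ws (C : {set 'I_r * 'I_q.+1}) :
  (forall w, w \in ws -> C :&: word_edge w != set0) -> #|C| <= k -> coverable k ws.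
Proof.
elim: k ws C => [|k IH] [|w ws] C meetC leCk //=;
  have /set0Pn[p] := meetC w (mem_head _ _); rewrite !inE => /andP[pC /eqP p_w].
  by rewrite leqn0 cards_eq0 in leCk; rewrite (eqP leCk) inE in pC.
apply/hasP; exists (val p.1); first by rewrite mem_iota ltn_ord.
apply: (IH _ (C :\ p)); last by move: leCk; rewrite (cardsD1 p C) pC.
move=> w'; rewrite mem_filter => /andP[neq_w' w'ws].
have w'_in : w' \in w :: ws by rewrite inE w'ws orbT.
have /set0Pn[x] := meetC w' w'_in; rewrite !inE => /andP[xC /eqP x_w'].
apply/set0Pn; exists x; rewrite !inE xC x_w' eqxx !andbT.
by apply: contra neq_w' => /eqP x_p; rewrite -p_w -x_p x_w'.
Qed.

Lemma word_hypergraph_tau_ge W :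
  ~~ coverable (r - 2) W -> tau_ge (word_hypergraph W) (r - 1).
Proof.
move=> not_cov C coverC; rewrite leqNgt; apply: contra not_cov => small_C.
apply: (coverable_of_cover (C := C)); last by lia.
by move=> w wW; apply: coverC; rewrite inE map_f.
Qed.

Lemma card_word_hypergraph W : #|word_hypergraph W| <= size W.
Proof. by rewrite cardsE -(size_map word_edge) card_size. Qed.

Variable W : seq (seq nat).
Hypothesis W_le_q : all (all (leq^~ q)) W.

Lemma nth_word_le w i : w \in W -> nth 0 w i <= q.
Proof.
move=> wW; have [lt_iw | ?] := ltnP i (size w); last by rewrite nth_default.
exact: (allP (allP W_le_q w wW)) _ (mem_nth 0 lt_iw).
Qed.

Lemma word_hypergraph_rpartite : rpartite fst (word_hypergraph W).
Proof.
move=> e; rewrite inE => /mapP[w wW ->] i.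
rewrite -(cards1 (i, inord (nth 0 w i) : 'I_q.+1)); apply: eq_card => -[j x].
rewrite !inE /= xpair_eqE; case: (eqVneq j i) => [-> | _]; rewrite ?andbT ?andbF //.
by rewrite -(inj_eq val_inj) /= inordK // ltnS nth_word_le.
Qed.

Lemma word_hypergraph_intersecting : all2rel agree W -> intersecting (word_hypergraph W).
Proof.
move=> /allrelP agreeW e1 e2; rewrite !inE => /mapP[w1 w1W ->] /mapP[w2 w2W ->].
have /hasP[i] := agreeW _ _ w1W w2W; rewrite mem_iota add0n => /andP[_ lt_ir] /eqP eq_i.
apply/set0Pn; exists (Ordinal lt_ir, inord (nth 0 w1 i)).
by rewrite !inE /= inordK ?ltnS ?nth_word_le // eq_i !eqxx.
Qed.

End WordHypergraph.

Lemma f_le_of_words r q W :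
  all (all (leq^~ q)) W -> all2rel (agree r) W -> ~~ coverable r (r - 2) W ->
  f_le r (size W).
Proof.
move=> W_le_q agreeW not_cov.
exists ('I_r * 'I_q.+1)%type, fst, (word_hypergraph r q W).
split; last exact: card_word_hypergraph.
split; [exact: word_hypergraph_rpartite | exact: word_hypergraph_intersecting
       | exact: word_hypergraph_tau_ge].
Qed.

Lemma f_le_4_6 : f_le 4 6.
Proof.
apply: (@f_le_of_words 4 2 [:: [:: 0; 1; 2; 1]; [:: 0; 2; 1; 2]; [:: 1; 2; 2; 0];
  [:: 0; 0; 0; 0]; [:: 2; 0; 2; 2]; [:: 1; 0; 1; 1]]); by vm_compute.
Qed.

Lemma f_le_5_9 : f_le 5 9.
Proof.
apply: (@f_le_of_words 5 3 [:: [:: 1; 3; 2; 3; 0]; [:: 3; 1; 2; 0; 1]; [:: 0; 0; 0; 0; 0];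
  [:: 3; 3; 0; 1; 2]; [:: 0; 2; 2; 1; 3]; [:: 1; 1; 0; 2; 3]; [:: 1; 2; 3; 0; 2];
  [:: 2; 3; 1; 0; 3]; [:: 3; 2; 1; 2; 0]]); by vm_compute.
Qed.

Lemma f_le_6_15 : f_le 6 15.
Proof.
apply: (@f_le_of_words 6 4 [:: [:: 0; 1; 4; 2; 3; 1]; [:: 2; 1; 1; 4; 0; 3];
  [:: 0; 2; 3; 4; 1; 2]; [:: 1; 0; 1; 1; 1; 1]; [:: 0; 3; 2; 1; 4; 3];
  [:: 3; 1; 2; 0; 1; 4]; [:: 2; 4; 3; 0; 4; 1]; [:: 3; 4; 4; 1; 0; 2];
  [:: 1; 1; 0; 3; 4; 2]; [:: 2; 0; 2; 2; 2; 2]; [:: 0; 4; 1; 3; 2; 4];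
  [:: 3; 0; 3; 3; 3; 3]; [:: 0; 0; 0; 0; 0; 0]; [:: 4; 2; 2; 3; 0; 1];
  [:: 3; 3; 0; 4; 2; 1]]); by vm_compute.
Qed.

Theorem theorem2 :
  f_eq 4 6 /\ f_eq 5 9 /\ (f_ge 6 12 /\ f_le 6 15).
Proof.
split; first by split; [exact: f_le_4_6 | exact: f_ge_4_6].
split; first by split; [exact: f_le_5_9 | exact: f_ge_5_9].
split; [exact: f_ge_6_12 | exact: f_le_6_15].
Qed.
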